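(* Let $n \in \mathbb{N}$. (i) Let $p, q \in \mathbb{N}$ with $5F_{n+2}-4 \le p < 5F_{n+3}-4$, $5F_{n+1}-4 \le q < 5F_{n+2}-4$ and $b_q = a_p + 1$. Then: (i.1) if $b_{q+1} - b_q = 3$, then $a_{p+1} = a_p + 2$, $a_{p+2} = a_p + 3$ and $b_{q+1} = a_{p+2} + 1$; (i.2) if $b_{q+1} - b_q = 2$, then $a_{p+1} = a_p + 2$ and $b_{q+1} = a_{p+1} + 1$. (ii) $\{a_{5F_{n+2}-4+u} : u = 0,1,\dots,5F_{n+1}\} \cup \{b_{5F_{n+1}-4+u} : u = 0,1,\dots,5F_n\} = \{5F_{n+3}-4, 5F_{n+3}-3, \dots, 5F_{n+4}-3\}$. (iii) $\{a_{5F_{n+2}-4+u} : u = 0,1,\dots,5F_{n+1}\} \cap \{b_{5F_{n+1}-4+u} : u = 0,1,\dots,5F_n\} = \emptyset$. (iv) $\{a_m : m \in \mathbb{N}\} \cap \{b_m : m \in \mathbb{N}\} = \emptyset$. (v) $\{a_m : m \in \mathbb{N}\} \cup \{b_m : m \in \mathbb{N}\} = \{6,7,8,\dots\}$.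
   Context: Fibonacci numbers: $F_1 = F_2 = 1$, $F_{i+2} = F_{i+1} + F_i$. Let $\sigma$ be the substitution on finite sequences over $\{1,2\}$ replacing each entry $1$ by $2$ and each entry $2$ by $2,1$. Let $C_{1,1} = (1)$, $C_{i+1,1} = \sigma(C_{i,1})$. For $i \in \mathbb{N}$ let $C_i$ be the concatenation of five copies of $C_{i,1}$. Let $(c_n)_{n \in \mathbb{N}}$ be the infinite sequence obtained by concatenating $C_1, C_2, C_3, \dots$ in order, and let $d_n = c_n + 1$. Define $a_1 = 6$, $a_n = 6 + \sum_{i=1}^{n-1} c_i$, and $b_1 = 12$, $b_n = 12 + \sum_{i=1}^{n-1} d_i$ for $n \in \mathbb{N}$. *)

From mathcomp Require Import all_boot.
Set Implicit Arguments. Unset Strict Implicit. Unset Printing Implicit Defensive.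

Fixpoint fib (i : nat) : nat :=
  match i with
  | 0 => 0
  | 1 => 1
  | (j.+1 as k).+1 => fib k + fib j
  end.

(* The substitution sigma: 1 |-> 2, 2 |-> 2,1 (anything else treated as 2). *)
Definition sigma (s : seq nat) : seq nat :=
  flatten [seq (if x == 1 then [:: 2] else [:: 2; 1]) | x <- s].

(* C_{i,1} for i >= 1: C_{1,1} = (1), C_{i+1,1} = sigma C_{i,1}. *)
Definition Cblock (i : nat) : seq nat := iter i.-1 sigma [:: 1].

Definition Cword (i : nat) : seq nat := flatten (nseq 5 (Cblock i)).

(* c_n (n >= 1) = n-th entry (1-indexed) of C_1 C_2 C_3 ...; the first n
   blocks already have length >= 5n >= n, so this prefix suffices. *)
Definition c_seq (n : nat) : nat :=
  nth 0 (flatten [seq Cword i | i <- iota 1 n]) n.-1.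

Definition d_seq (n : nat) : nat := (c_seq n).+1.

Definition a_seq (n : nat) : nat := 6 + \sum_(1 <= i < n) c_seq i.
Definition b_seq (n : nat) : nat := 12 + \sum_(1 <= i < n) d_seq i.

From mathcomp Require Import all_boot zify.

(* The five-fold words C_k satisfy sigma C_(k+1) = C_(k+2).  On the
   k-th block of indices, a runs through the partial sums of sigma C_(k+1) and b through
   the partial sums of C_(k+1), shifted by one per letter, both from a common base.  For a
   word w over {1, 2}, each letter y is a b-step of length y + 1 and sigma y = [2] or
   [2; 1] cuts it into a-steps landing exactly in between; so within a block the a- and
   b-values interleave and tile an interval, giving (i)-(iii).  Every value >= 11 lies in
   such an interval for some block (Fibonacci bracketing), and the strict monotonicity of
   a and b pins the indices of a common value inside that block, giving (iv) and (v). *)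

Definition word12 (w : seq nat) : bool := all (fun x => (x == 1) || (x == 2)) w.

Definition psum (w : seq nat) (u : nat) : nat := sumn (take u w).

Lemma sigma_cons y w :
  sigma (y :: w) = (if y == 1 then [:: 2] else [:: 2; 1]) ++ sigma w.
Proof. by []. Qed.

Lemma sigma_cat s1 s2 : sigma (s1 ++ s2) = sigma s1 ++ sigma s2.
Proof. by rewrite /sigma map_cat flatten_cat. Qed.

Lemma word12_sigma w : word12 (sigma w).
Proof. by elim: w => [|y w IHw] //; rewrite sigma_cons; case: (y == 1). Qed.

Lemma size_sigma w : word12 w -> size (sigma w) = sumn w.
Proof.
elim: w => [|y w IHw] //= /andP[/orP y12 w12].
by rewrite sigma_cons size_cat IHw //; case: y12 => /eqP->.
Qed.

Lemma sumn_sigma w : word12 w -> sumn (sigma w) = sumn w + size w.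
Proof.
elim: w => [|y w IHw] //= /andP[/orP y12 w12].
by rewrite sigma_cons sumn_cat IHw //; case: y12 => /eqP-> /=; lia.
Qed.

Lemma psum0 w : psum w 0 = 0.
Proof. by rewrite /psum take0. Qed.

Lemma psum_size w : psum w (size w) = sumn w.
Proof. by rewrite /psum take_size. Qed.

Lemma psum_le w u : psum w u <= sumn w.
Proof. by rewrite /psum -{2}(cat_take_drop u w) sumn_cat leq_addr. Qed.

Lemma psumS w u : u < size w -> psum w u.+1 = psum w u + nth 0 w u.
Proof. by move=> lt_u; rewrite /psum (take_nth 0 lt_u) sumn_rcons. Qed.

Lemma psum_cons y w u : psum (y :: w) u.+1 = y + psum w u.
Proof. by []. Qed.

Lemma psum_cat_size s1 s2 u : psum (s1 ++ s2) (size s1 + u) = sumn s1 + psum s2 u.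
Proof. by rewrite /psum takeD take_size_cat // drop_size_cat // sumn_cat. Qed.

Lemma psum_sigma_cover w x : word12 w -> x <= sumn (sigma w) + 1 ->
  (exists2 u, u <= size (sigma w) & x = psum (sigma w) u) \/
  (exists2 v, v <= size w & x = (psum w v + v).+1).
Proof.
elim: w x => [|y w IHw] x.
  by move=> _; case: x => [|[|]] // _; [left | right]; exists 0.
move=> /= /andP[/orP y12 w12]; rewrite sigma_cons.
case: y12 => /eqP-> /=.
  case: x => [|[|x]] lex; [by left; exists 0 | by right; exists 0 |].
  have [|[u le_u ->]|[v le_v ->]] := IHw x w12; first lia.
    by left; exists u.+1.
  by right; exists v.+1 => //; rewrite psum_cons; lia.
case: x => [|[|[|x]]] lex; [by left; exists 0 | by right; exists 0 | by left; exists 1 |].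
have [|[u le_u ->]|[v le_v ->]] := IHw x w12; first lia.
  by left; exists u.+2 => //; rewrite !psum_cons; lia.
by right; exists v.+1 => //; rewrite psum_cons; lia.
Qed.

Lemma psum_sigma_neq w u v : word12 w -> psum (sigma w) u <> (psum w v + v).+1.
Proof.
elim: w u v => [|y w IHw] u v; first by rewrite /psum.
move=> /= /andP[/orP y12 w12]; rewrite sigma_cons.
case: y12 => /eqP-> /=.
  case: u v => [|u] [|v]; rewrite ?psum_cons ?psum0 /=; try lia.
  by have := IHw u v w12; lia.
case: u v => [|[|u]] [|v]; rewrite ?psum_cons ?psum0 /=; try lia.
by have := IHw u v w12; lia.
Qed.

Lemma psum_sigma_step w p q : word12 w -> q < size w ->
  psum (sigma w) p = psum w q + q ->
  psum (sigma w) p.+1 = psum (sigma w) p + 2 /\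
  (nth 0 w q = 2 -> p.+2 <= size (sigma w) /\ psum (sigma w) p.+2 = psum (sigma w) p + 3).
Proof.
elim: w p q => [|y w IHw] p q //.
move=> /= /andP[/orP y12 w12]; rewrite sigma_cons.
case: y12 => /eqP-> /=.
  case: p q => [|p] [|q] lt_q; rewrite ?psum_cons ?psum0 /=; try lia.
  move=> eq_pq; have [|step2 step3] := IHw p q w12 lt_q; first lia.
  split; first lia.
  by move=> /step3[le_p eq3]; split; lia.
case: p q => [|[|p]] [|q] lt_q; rewrite ?psum_cons ?psum0 /=; try lia.
move=> eq_pq; have [|step2 step3] := IHw p q w12 lt_q; first lia.
split; first lia.
by move=> /step3[le_p eq3]; split; lia.
Qed.

Lemma fibSS k : fib k.+2 = fib k.+1 + fib k.
Proof. by []. Qed.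

Lemma fib_gt0 k : 0 < fib k.+1.
Proof. by elim: k => // k IHk; rewrite fibSS; lia. Qed.

Lemma fib_ge k : k.+1 <= fib k.+2.
Proof. by elim: k => // k IHk; rewrite fibSS; have := fib_gt0 k; lia. Qed.

Lemma word12_Cblock j : word12 (Cblock j).
Proof. by case: j => [|j] //; case: j => [|j] //; exact: word12_sigma. Qed.

Lemma size_sumn_Cblock j :
  size (Cblock j.+1) = fib j.+1 /\ sumn (Cblock j.+1) = fib j.+2.
Proof.
elim: j => [|j [size_j sumn_j]] //.
have -> : Cblock j.+2 = sigma (Cblock j.+1) by [].
by rewrite size_sigma ?sumn_sigma ?word12_Cblock // size_j sumn_j.
Qed.

Lemma Cword_cat j : Cword j = Cblock j ++ Cblock j ++ Cblock j ++ Cblock j ++ Cblock j.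
Proof. by rewrite /Cword /= cats0. Qed.

Lemma Cword_sigma j : Cword j.+2 = sigma (Cword j.+1).
Proof. by rewrite !Cword_cat !sigma_cat. Qed.

Lemma word12_Cword j : word12 (Cword j).
Proof. by move: (word12_Cblock j); rewrite Cword_cat /word12 !all_cat => ->. Qed.

Lemma size_Cword j : size (Cword j.+1) = 5 * fib j.+1.
Proof. by rewrite Cword_cat !size_cat (size_sumn_Cblock j).1; lia. Qed.

Lemma sumn_Cword j : sumn (Cword j.+1) = 5 * fib j.+2.
Proof. by rewrite Cword_cat !sumn_cat (size_sumn_Cblock j).2; lia. Qed.

Definition Cprefix (k : nat) : seq nat := flatten [seq Cword i | i <- iota 1 k].

Lemma CprefixS k : Cprefix k.+1 = Cprefix k ++ Cword k.+1.
Proof. by rewrite /Cprefix -[k.+1]addn1 iotaD map_cat flatten_cat /= cats0 addnC. Qed.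

Lemma word12_Cprefix k : word12 (Cprefix k).
Proof.
elim: k => [|k IHk] //.
by rewrite CprefixS /word12 all_cat; apply/andP; split; [exact: IHk | exact: word12_Cword].
Qed.

Lemma size_Cprefix k : size (Cprefix k) + 5 = 5 * fib k.+2.
Proof.
elim: k => [|k IHk] //.
by rewrite CprefixS size_cat size_Cword (fibSS k.+1); lia.
Qed.

Lemma sumn_Cprefix k : sumn (Cprefix k) + 10 = 5 * fib k.+3.
Proof.
elim: k => [|k IHk] //.
by rewrite CprefixS sumn_cat sumn_Cword (fibSS k.+2); lia.
Qed.

Lemma Cprefix_prefix k l : exists s, Cprefix (k + l) = Cprefix k ++ s.
Proof.
elim: l => [|l [s IHl]]; first by exists [::]; rewrite addn0 cats0.
by exists (s ++ Cword (k + l).+1); rewrite addnS CprefixS IHl catA.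
Qed.

Lemma nth_Cprefix k l m : m < size (Cprefix k) ->
  nth 0 (Cprefix (k + l)) m = nth 0 (Cprefix k) m.
Proof. by move=> lt_m; have [s ->] := Cprefix_prefix k l; rewrite nth_cat lt_m. Qed.

Lemma ltn_size_Cprefix k : k < size (Cprefix k.+1).
Proof. by have := size_Cprefix k.+1; have := fib_ge k.+1; lia. Qed.

Lemma c_seq_nth k m : m < size (Cprefix k) -> c_seq m.+1 = nth 0 (Cprefix k) m.
Proof.
move=> lt_mk; have lt_m := ltn_size_Cprefix m; rewrite /c_seq -/(Cprefix m.+1).
have [le_km | le_mk] := leqP k m.+1.
  by rewrite -[in Cprefix m.+1](subnKC le_km) nth_Cprefix.
by rewrite -[in Cprefix k](subnKC (ltnW le_mk)) nth_Cprefix.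
Qed.

Lemma c_seq_gt0 m : 0 < c_seq m.+1.
Proof.
have lt_m := ltn_size_Cprefix m; rewrite (c_seq_nth _ _ lt_m).
by move: (word12_Cprefix m.+1) => /allP/(_ _ (mem_nth 0 lt_m))/orP[]/eqP->.
Qed.

Lemma a_seqS m : a_seq m.+2 = a_seq m.+1 + c_seq m.+1.
Proof. by rewrite /a_seq big_nat_recr //= addnA. Qed.

Lemma b_seqS m : b_seq m.+2 = b_seq m.+1 + (c_seq m.+1).+1.
Proof. by rewrite /b_seq big_nat_recr //= addnA. Qed.

Lemma a_seq_psum k m : m <= size (Cprefix k) -> a_seq m.+1 = 6 + psum (Cprefix k) m.
Proof.
elim: m => [|m IHm] le_m; first by rewrite psum0 /a_seq big_geq.
by rewrite a_seqS IHm 1?ltnW // psumS // (c_seq_nth _ _ le_m) addnA.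
Qed.

Lemma b_seq_psum k m : m <= size (Cprefix k) -> b_seq m.+1 = 12 + psum (Cprefix k) m + m.
Proof.
elim: m => [|m IHm] le_m; first by rewrite psum0 /b_seq big_geq.
by rewrite b_seqS IHm 1?ltnW // psumS // (c_seq_nth _ _ le_m); lia.
Qed.

Lemma a_seq_Cprefix k u : u <= size (Cword k.+1) ->
  a_seq (size (Cprefix k) + u).+1 = 6 + sumn (Cprefix k) + psum (Cword k.+1) u.
Proof.
move=> le_u; rewrite (@a_seq_psum k.+1) CprefixS ?psum_cat_size ?addnA //.
by rewrite size_cat leq_add2l.
Qed.

Lemma b_seq_Cprefix k u : u <= size (Cword k.+1) ->
  b_seq (size (Cprefix k) + u).+1 =
  12 + sumn (Cprefix k) + size (Cprefix k) + (psum (Cword k.+1) u + u).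
Proof.
move=> le_u; rewrite (@b_seq_psum k.+1) CprefixS ?psum_cat_size; first lia.
by rewrite size_cat leq_add2l.
Qed.

Lemma a_seq_block k u : u <= 5 * fib k.+2 ->
  a_seq (5 * fib k.+3 - 4 + u) = 5 * fib k.+4 - 4 + psum (sigma (Cword k.+1)) u.
Proof.
move=> le_u; have size_k := size_Cprefix k.+1; have sumn_k := sumn_Cprefix k.+1.
have -> : 5 * fib k.+3 - 4 + u = (size (Cprefix k.+1) + u).+1 by lia.
by rewrite -Cword_sigma a_seq_Cprefix ?size_Cword //; lia.
Qed.

Lemma b_seq_block k v : v <= 5 * fib k.+1 ->
  b_seq (5 * fib k.+2 - 4 + v) = 5 * fib k.+4 - 3 + (psum (Cword k.+1) v + v).
Proof.
move=> le_v; have size_k := size_Cprefix k; have sumn_k := sumn_Cprefix k.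
have -> : 5 * fib k.+2 - 4 + v = (size (Cprefix k) + v).+1 by lia.
by rewrite b_seq_Cprefix ?size_Cword // (fibSS k.+2); lia.
Qed.

Lemma ab_block_step k p q :
  5 * fib k.+3 - 4 <= p < 5 * fib k.+4 - 4 ->
  5 * fib k.+2 - 4 <= q < 5 * fib k.+3 - 4 ->
  b_seq q = a_seq p + 1 ->
  (b_seq q.+1 - b_seq q = 3 ->
     [/\ a_seq p.+1 = a_seq p + 2, a_seq p.+2 = a_seq p + 3
       & b_seq q.+1 = a_seq p.+2 + 1]) /\
  (b_seq q.+1 - b_seq q = 2 ->
     a_seq p.+1 = a_seq p + 2 /\ b_seq q.+1 = a_seq p.+1 + 1).
Proof.
move=> /andP[le_p lt_p] /andP[le_q lt_q].
have fib4 := fibSS k.+2; have fib3 := fibSS k.+1.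
have size_w := size_Cword k.
have size_sw : size (sigma (Cword k.+1)) = 5 * fib k.+2 by rewrite -Cword_sigma size_Cword.
move: (p - _) (subnKC le_p) lt_p => P <- {p le_p} lt_P.
move: (q - _) (subnKC le_q) lt_q => Q <- {q le_q} lt_Q.
have lt_P' : P < 5 * fib k.+2 by lia.
have lt_Q' : Q < 5 * fib k.+1 by lia.
have lt_Qw : Q < size (Cword k.+1) by rewrite size_w.
rewrite -!addnS (a_seq_block _ _ (ltnW lt_P')) (a_seq_block _ _ lt_P').
rewrite (b_seq_block _ _ (ltnW lt_Q')) (b_seq_block _ _ lt_Q') (psumS _ _ lt_Qw).
move=> eq_ab.
have eq_PQ : psum (sigma (Cword k.+1)) P = psum (Cword k.+1) Q + Q by lia.
have [step2 step3] := psum_sigma_step _ _ _ (word12_Cword k.+1) lt_Qw eq_PQ.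
split=> [diff3 | diff2]; last lia.
have [le_P2 step3'] := step3 ltac:(lia).
by rewrite a_seq_block; [split; lia | rewrite -size_sw].
Qed.

Lemma ab_block_range k x :
  ((exists2 u, u <= 5 * fib k.+2 & x = a_seq (5 * fib k.+3 - 4 + u)) \/
   (exists2 v, v <= 5 * fib k.+1 & x = b_seq (5 * fib k.+2 - 4 + v)))
  <-> 5 * fib k.+4 - 4 <= x <= 5 * fib k.+4.+1 - 3.
Proof.
have size_w := size_Cword k; have sumn_w := sumn_Cword k.
have size_sw : size (sigma (Cword k.+1)) = 5 * fib k.+2 by rewrite -Cword_sigma size_Cword.
have fib5 := fibSS k.+3; have fib4 := fibSS k.+2; have fib3 := fibSS k.+1.
have pos := fib_gt0 k.+1.
have sumn_sw : sumn (sigma (Cword k.+1)) = 5 * fib k.+3.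
  by rewrite sumn_sigma ?word12_Cword // sumn_w size_w; lia.
split=> [[[u le_u ->]|[v le_v ->]] | /andP[lo_x hi_x]].
- by rewrite a_seq_block //; have := psum_le (sigma (Cword k.+1)) u; lia.
- by rewrite b_seq_block //; have := psum_le (Cword k.+1) v; lia.
have [|[u le_u eq_x]|[v le_v eq_x]] := psum_sigma_cover _ (x - (5 * fib k.+4 - 4)) (word12_Cword k.+1).
- by lia.
- by left; exists u; rewrite ?a_seq_block -?size_sw //; lia.
- by right; exists v; rewrite ?b_seq_block -?size_w //; lia.
Qed.

Lemma ab_block_neq k u v : u <= 5 * fib k.+2 -> v <= 5 * fib k.+1 ->
  a_seq (5 * fib k.+3 - 4 + u) <> b_seq (5 * fib k.+2 - 4 + v).
Proof.
move=> le_u le_v; rewrite a_seq_block // b_seq_block //.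
by have := psum_sigma_neq _ u v (word12_Cword k.+1); have := fib_gt0 k.+3; lia.
Qed.

Lemma a_seq_lt : {homo (fun m => a_seq m.+1) : m n / m < n}.
Proof.
apply: homo_ltn; first exact: ltn_trans.
by move=> i; rewrite a_seqS; have := c_seq_gt0 i; lia.
Qed.

Lemma b_seq_lt : {homo (fun m => b_seq m.+1) : m n / m < n >-> m.+1 < n}.
Proof.
apply: (homo_ltn (r := fun x y => x.+1 < y)).
  by move=> y x z lt_xy /ltnW; exact: ltn_trans.
by move=> i; rewrite b_seqS; have := c_seq_gt0 i; lia.
Qed.

Lemma a_seq_index k m : 5 * fib k.+4 - 4 <= a_seq m.+1 < 5 * fib k.+4.+1 - 4 ->
  exists2 u, u <= 5 * fib k.+2 & m.+1 = 5 * fib k.+3 - 4 + u.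
Proof.
move=> /andP[lo_m hi_m].
have a_lo := a_seq_block k 0 (leq0n _); have a_hi := a_seq_block k.+1 0 (leq0n _).
rewrite addn0 psum0 addn0 in a_lo a_hi.
have fib4 := fibSS k.+2; have fib3 := fib_ge k.+1.
have lo_idx : 5 * fib k.+3 - 5 <= m.
  rewrite leqNgt; apply/negP => /a_seq_lt /=.
  have -> : (5 * fib k.+3 - 5).+1 = 5 * fib k.+3 - 4 by lia.
  by rewrite a_lo; lia.
have hi_idx : m < 5 * fib k.+4 - 5.
  rewrite ltnNge; apply/negP; rewrite -(leq_mono a_seq_lt) /=.
  have -> : (5 * fib k.+4 - 5).+1 = 5 * fib k.+4 - 4 by lia.
  by rewrite a_hi; lia.
by exists (m.+1 - (5 * fib k.+3 - 4)); lia.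
Qed.

Lemma b_seq_index k m : 5 * fib k.+4 - 4 <= b_seq m.+1 <= 5 * fib k.+4.+1 - 3 ->
  exists2 v, v <= 5 * fib k.+1 & m.+1 = 5 * fib k.+2 - 4 + v.
Proof.
move=> /andP[lo_m hi_m].
have b_lo := b_seq_block k 0 (leq0n _); rewrite addn0 psum0 in b_lo.
have b_hi := b_seq_block k _ (leqnn _).
rewrite -{2}(size_Cword k) psum_size sumn_Cword in b_hi.
have fib5 := fibSS k.+3; have fib4 := fibSS k.+2; have fib3 := fibSS k.+1.
have fib2 := fib_ge k.
have lo_idx : 5 * fib k.+2 - 5 <= m.
  rewrite leqNgt; apply/negP => /b_seq_lt /=.
  have -> : (5 * fib k.+2 - 5).+1 = 5 * fib k.+2 - 4 by lia.
  by rewrite b_lo; lia.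
have hi_idx : m <= 5 * fib k.+3 - 5.
  rewrite leqNgt; apply/negP => /b_seq_lt /=.
  have -> : (5 * fib k.+3 - 5).+1 = 5 * fib k.+2 - 4 + 5 * fib k.+1 by lia.
  by rewrite b_hi; lia.
by exists (m.+1 - (5 * fib k.+2 - 4)); lia.
Qed.

Lemma exists_bracket (g : nat -> nat) x : g 0 <= x -> (forall k, k <= g k) ->
  exists k, g k <= x < g k.+1.
Proof.
move=> g0x gk; have ex_gt : exists k, x < g k by exists x.+1; exact: gk.
case: (ex_minnP ex_gt) => [[|k] lt_x min_k]; first by rewrite ltnNge g0x in lt_x.
exists k; rewrite lt_x andbT leqNgt; apply/negP => /min_k.
by rewrite ltnn.
Qed.

Lemma bracket_block x : 11 <= x -> exists k, 5 * fib k.+4 - 4 <= x < 5 * fib k.+4.+1 - 4.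
Proof.
move=> le11x; apply: (exists_bracket (fun k => 5 * fib k.+4 - 4)) => // k.
by have := fib_ge k.+2; lia.
Qed.

Lemma a_neq_b m m' : 0 < m -> 0 < m' -> a_seq m <> b_seq m'.
Proof.
case: m m' => [|m] [|m'] // _ _ eq_ab.
have [|k /andP[lo_x hi_x]] := bracket_block (b_seq m'.+1); first by rewrite /b_seq; lia.
have [u le_u eq_m] : exists2 u, u <= 5 * fib k.+2 & m.+1 = 5 * fib k.+3 - 4 + u.
  by apply: a_seq_index; rewrite eq_ab lo_x.
have [v le_v eq_m'] : exists2 v, v <= 5 * fib k.+1 & m'.+1 = 5 * fib k.+2 - 4 + v.
  by apply: b_seq_index; rewrite lo_x; lia.
by apply: (ab_block_neq k u v le_u le_v); rewrite -eq_m -eq_m'.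
Qed.

Lemma ab_cover x :
  ((exists2 m, 0 < m & x = a_seq m) \/ (exists2 m, 0 < m & x = b_seq m)) <-> 6 <= x.
Proof.
split=> [[[m _ ->]|[m _ ->]] | le6x]; first by rewrite /a_seq leq_addr.
  by rewrite /b_seq; lia.
have [le_x10 | lt10x] := leqP x 10.
  left; exists (x - 5); first lia.
  have -> : x - 5 = (size (Cprefix 0) + (x - 6)).+1 by rewrite /=; lia.
  rewrite a_seq_Cprefix //=; last lia.
  have -> : Cword 1 = nseq 5 1 by [].
  by rewrite /psum take_nseq ?sumn_nseq; lia.
have [k /andP[lo_x hi_x]] := bracket_block x lt10x.
have fib2 := fib_gt0 k.+1; have fib3 := fib_gt0 k.+2.
have /ab_block_range[[u _ ->]|[v _ ->]] : 5 * fib k.+4 - 4 <= x <= 5 * fib k.+4.+1 - 3.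
  by rewrite lo_x; lia.
- by left; eexists; last reflexivity; lia.
- by right; eexists; last reflexivity; lia.
Qed.

Theorem lemma4p3 (n : nat) (hn : 1 <= n) :
  (* (i) *)
  (forall p q : nat,
     5 * fib n.+2 - 4 <= p < 5 * fib n.+3 - 4 ->
     5 * fib n.+1 - 4 <= q < 5 * fib n.+2 - 4 ->
     b_seq q = a_seq p + 1 ->
     (b_seq q.+1 - b_seq q = 3 ->
        [/\ a_seq p.+1 = a_seq p + 2, a_seq p.+2 = a_seq p + 3
          & b_seq q.+1 = a_seq p.+2 + 1]) /\
     (b_seq q.+1 - b_seq q = 2 ->
        a_seq p.+1 = a_seq p + 2 /\ b_seq q.+1 = a_seq p.+1 + 1)) /\
  (* (ii) *)
  (forall x : nat,
     ((exists2 u, u <= 5 * fib n.+1 & x = a_seq (5 * fib n.+2 - 4 + u)) \/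
      (exists2 u, u <= 5 * fib n & x = b_seq (5 * fib n.+1 - 4 + u)))
     <-> 5 * fib n.+3 - 4 <= x <= 5 * fib n.+4 - 3) /\
  (* (iii) *)
  (forall u v : nat, u <= 5 * fib n.+1 -> v <= 5 * fib n ->
     a_seq (5 * fib n.+2 - 4 + u) <> b_seq (5 * fib n.+1 - 4 + v)) /\
  (* (iv) *)
  (forall m m' : nat, 1 <= m -> 1 <= m' -> a_seq m <> b_seq m') /\
  (* (v) *)
  (forall x : nat,
     ((exists2 m, 1 <= m & x = a_seq m) \/ (exists2 m, 1 <= m & x = b_seq m))
     <-> 6 <= x).
Proof.
case: n hn => [|k] // _.
split; first exact: ab_block_step.
split; first exact: ab_block_range.
split; first exact: ab_block_neq.
split; first exact: a_neq_b.
exact: ab_cover.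
Qed.
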